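(* Let $n\ge 1$ and let $P\in\mathbb{R}^{n\times n}$ satisfy $\|P\|<1$. Let $w\in\mathbb{R}^n$ be a global maximizer of $$L(w)=\langle w,Pw\rangle-\sum_{i=1}^n\log\Big(\sum_{j=1}^n\exp(w_iw_j)\Big)$$ over $\mathbb{R}^n$. Then $$\|w\|^2\le\frac{n\log n}{1-\|P\|}.$$
   Context: $\|w\|$ denotes the Euclidean norm of $w$, $\langle\cdot,\cdot\rangle$ the standard inner product, and $\|P\|$ the operator norm of $P$ induced by the Euclidean norm. *)

From HB Require Import structures.
From mathcomp Require Import all_boot all_order all_algebra.
From mathcomp Require Import all_classical all_reals all_analysis.
Set Implicit Arguments. Unset Strict Implicit. Unset Printing Implicit Defensive.
Import Order.TTheory GRing.Theory Num.Theory.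
Local Open Scope ring_scope.
Local Open Scope classical_set_scope.

Definition eucl_norm (R : realType) (n : nat) (x : 'cV[R]_n) : R :=
  Num.sqrt (\sum_(i < n) x i 0 ^+ 2).

Definition inner (R : realType) (n : nat) (x y : 'cV[R]_n) : R :=
  \sum_(i < n) x i 0 * y i 0.

Definition op_norm (R : realType) (n : nat) (P : 'M[R]_n) : R :=
  sup [set eucl_norm (P *m x) | x in [set x : 'cV[R]_n | eucl_norm x = 1]].

Definition Lobj (R : realType) (n : nat) (P : 'M[R]_n) (w : 'cV[R]_n) : R :=
  inner w (P *m w) - \sum_(i < n) ln (\sum_(j < n) expR (w i 0 * w j 0)).

From HB Require Import structures.
From mathcomp Require Import all_boot all_order all_algebra.
From mathcomp Require Import all_classical all_reals all_analysis.
From mathcomp Require Import ring lra.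
Set Implicit Arguments. Unset Strict Implicit. Unset Printing Implicit Defensive.
Import Order.TTheory GRing.Theory Num.Theory.
Local Open Scope ring_scope.

(* Compare a maximizer w with the point 0, where L(0) = -n log n.  Each
   log-sum-exp term is at least its diagonal exponent w_i^2, and by
   Cauchy-Schwarz <w, P w> <= |P| |w|^2, so L(w) <= (|P| - 1) |w|^2.
   Hence -n log n <= (|P| - 1) |w|^2, and |P| < 1 lets us divide. *)

Lemma sumr_mul_sqr_le (R : realFieldType) (I : finType) (a b : I -> R) :
  (\sum_i a i * b i) ^+ 2 <= (\sum_i a i ^+ 2) * (\sum_i b i ^+ 2).
Proof.
have prod_sum (F G : I -> R) :
    (\sum_i F i) * (\sum_j G j) = \sum_i \sum_j F i * G j.
  by rewrite mulr_suml; apply: eq_bigr => i _; rewrite mulr_sumr.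
set D := (\sum_i \sum_j (a i ^+ 2 * b j ^+ 2 - a i * b i * (a j * b j))).
have defect : (\sum_i a i ^+ 2) * (\sum_i b i ^+ 2) - (\sum_i a i * b i) ^+ 2 = D.
  rewrite expr2 !prod_sum -sumrB; apply: eq_bigr => i _; by rewrite sumrB.
(* Lagrange's identity: the defect is half a sum of squares. *)
have lagrange : \sum_i \sum_j (a i * b j - a j * b i) ^+ 2 = 2 * D.
  rewrite mulr_natl mulr2n {2}/D [X in _ = _ + X]exchange_big /= -big_split.
  apply: eq_bigr => i _.
  by rewrite -big_split; apply: eq_bigr => j _ /=; ring.
have : 0 <= \sum_i \sum_j (a i * b j - a j * b i) ^+ 2.
  by apply: sumr_ge0 => i _; apply: sumr_ge0 => j _; exact: sqr_ge0.
rewrite lagrange -defect; lra.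
Qed.

Lemma sumr_mul_le_sqrt (R : rcfType) (I : finType) (a b : I -> R) :
  \sum_i a i * b i <= Num.sqrt (\sum_i a i ^+ 2) * Num.sqrt (\sum_i b i ^+ 2).
Proof.
have sqr_sum_ge0 (F : I -> R) : 0 <= \sum_i F i ^+ 2.
  by apply: sumr_ge0 => i _; exact: sqr_ge0.
rewrite -sqrtrM // (le_trans (ler_norm _)) // -sqrtr_sqr ler_sqrt.
  exact: sumr_mul_sqr_le.
exact: mulr_ge0.
Qed.

Section EuclideanNorm.
Variables (R : realType) (n : nat).
Implicit Types (x y : 'cV[R]_n).

Lemma eucl_norm_ge0 x : 0 <= eucl_norm x.
Proof. exact: sqrtr_ge0. Qed.

Lemma sqr_eucl_norm x : eucl_norm x ^+ 2 = \sum_i x i 0 ^+ 2.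
Proof. by rewrite sqr_sqrtr //; apply: sumr_ge0 => i _; exact: sqr_ge0. Qed.

Lemma eucl_normZ (c : R) x : eucl_norm (c *: x) = `|c| * eucl_norm x.
Proof.
rewrite /eucl_norm -sqrtr_sqr -sqrtrM ?sqr_ge0 // mulr_sumr.
by congr Num.sqrt; apply: eq_bigr => i _; rewrite mxE exprMn.
Qed.

Lemma eucl_norm_eq0 x : eucl_norm x = 0 -> x = 0.
Proof.
move=> /eqP; rewrite sqrtr_eq0 => sum_le0.
have sum_eq0 : \sum_i x i 0 ^+ 2 = 0.
  by apply/eqP; rewrite eq_le sum_le0 sumr_ge0 // => i _; exact: sqr_ge0.
apply/matrixP => i j; rewrite (ord1 j) mxE; apply/eqP; rewrite -sqrf_eq0.
by rewrite (psumr_eq0P (fun i _ => sqr_ge0 (x i 0)) sum_eq0).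
Qed.

Lemma inner_le_eucl_norm x y : inner x y <= eucl_norm x * eucl_norm y.
Proof. exact: sumr_mul_le_sqrt. Qed.

End EuclideanNorm.

Section OperatorNorm.
Variables (R : realType) (n : nat) (P : 'M[R]_n).

Lemma op_norm_has_ubound :
  has_ubound [set eucl_norm (P *m x) | x in [set x : 'cV[R]_n | eucl_norm x = 1]].
Proof.
exists (Num.sqrt (\sum_i \sum_j P i j ^+ 2)) => _ [x /= x_unit <-].
rewrite /eucl_norm ler_sqrt; last first.
  by apply: sumr_ge0 => i _; apply: sumr_ge0 => j _; exact: sqr_ge0.
have sum_x : \sum_j x j 0 ^+ 2 = 1 by rewrite -sqr_eucl_norm x_unit expr1n.
apply: ler_sum => i _; rewrite mxE.
by have := sumr_mul_sqr_le (fun j => P i j) (fun j => x j 0); rewrite sum_x mulr1.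
Qed.

Lemma eucl_norm_mulmx_le (x : 'cV[R]_n) :
  eucl_norm (P *m x) <= op_norm P * eucl_norm x.
Proof.
have [x_norm0|x_norm_neq0] := eqVneq (eucl_norm x) 0.
  have x0 := eucl_norm_eq0 x_norm0.
  by rewrite x_norm0 mulr0 x0 mulmx0 -x0 x_norm0.
have x_norm_gt0 : 0 < eucl_norm x by rewrite lt_def x_norm_neq0 eucl_norm_ge0.
set u := (eucl_norm x)^-1 *: x.
have u_unit : eucl_norm u = 1.
  by rewrite eucl_normZ ger0_norm ?invr_ge0 ?eucl_norm_ge0 // mulVf.
have := ub_le_sup op_norm_has_ubound (ex_intro2 _ _ u u_unit erefl).
rewrite -scalemxAr eucl_normZ ger0_norm ?invr_ge0 ?eucl_norm_ge0 //.
by rewrite -ler_pdivrMr // mulrC.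
Qed.

Lemma inner_mulmx_le (x : 'cV[R]_n) :
  inner x (P *m x) <= op_norm P * eucl_norm x ^+ 2.
Proof.
apply: (le_trans (inner_le_eucl_norm x (P *m x))).
rewrite expr2 mulrA [_ * eucl_norm x]mulrC.
by rewrite ler_wpM2l ?eucl_norm_ge0 ?eucl_norm_mulmx_le.
Qed.

End OperatorNorm.

Lemma le_ln_sumr_expR (R : realType) (I : finType) (a : I -> R) (i : I) :
  a i <= ln (\sum_j expR (a j)).
Proof.
rewrite -[leLHS]expRK (bigD1 i) //= ler_ln ?posrE ?lerDl ?ltr_pwDl ?expR_gt0 //.
all: by apply: sumr_ge0 => j _; exact/ltW/expR_gt0.
Qed.

Section Objective.
Variables (R : realType) (n : nat) (P : 'M[R]_n).

Lemma Lobj_le (w : 'cV[R]_n) : Lobj P w <= (op_norm P - 1) * eucl_norm w ^+ 2.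
Proof.
rewrite mulrBl mul1r; apply: lerB; first exact: inner_mulmx_le.
rewrite sqr_eucl_norm; apply: ler_sum => i _.
by rewrite expr2; exact: (le_ln_sumr_expR (fun j => w i 0 * w j 0)).
Qed.

Lemma Lobj0 : Lobj P 0 = - (n%:R * ln (n%:R : R)).
Proof.
rewrite /Lobj /inner big1 ?sub0r => [|i _]; last by rewrite mxE mul0r.
rewrite (eq_bigr (fun _ => ln n%:R)) ?sumr_const ?card_ord ?mulr_natl // => i _.
by rewrite (eq_bigr (fun _ => 1)) ?sumr_const ?card_ord // => j _; rewrite mxE mul0r expR0.
Qed.

End Objective.

Theorem theorem3p2 (R : realType) (n : nat) (P : 'M[R]_n) (w : 'cV[R]_n) :
  (1 <= n)%N ->
  op_norm P < 1 ->
  (forall v : 'cV[R]_n, Lobj P v <= Lobj P w) ->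
  eucl_norm w ^+ 2 <= (n%:R * ln (n%:R : R)) / (1 - op_norm P).
Proof.
move=> _ normP_lt1 w_max.
have := le_trans (w_max 0) (Lobj_le P w).
by rewrite Lobj0 -opprB mulNr lerN2 mulrC -ler_pdivlMr ?subr_gt0.
Qed.
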